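(* There exists an infinite strictly increasing sequence $\langle e_n : n\in\omega\rangle$ of natural numbers such that $W_{e_n}=\{e_m : m>n\}$ for every $n\in\omega$, and such that the sequence $\langle e_n:n\in\omega\rangle$ is not computable.
   Context: $\omega$ denotes the set of natural numbers $\{0,1,2,\dots\}$. $\langle \psi_e : e\in\omega\rangle$ is a standard (acceptable, in the sense of Rogers) computable numbering of all partial computable functions from $\omega$ to $\omega$, and $W_e$ denotes the domain of $\psi_e$, so $\langle W_e:e\in\omega\rangle$ is a uniform listing of all computably enumerable subsets of $\omega$. *)

(* A concrete acceptable Goedel numbering of the unary partial
   recursive functions, built from a mu-recursive basis over Cantor pairing. *)
From Stdlib Require Import Arith PeanoNat.

Definition cpair (a b : nat) : nat := (a + b) * (a + b + 1) / 2 + b.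

(** Codes of unary partial recursive functions (arguments of several
    variables are passed as Cantor pairs). *)
Inductive code : Type :=
| cZero
| cSucc
| cFst
| cSnd
| cId
| cComp (f g : code)
| cPair (f g : code)
| cRec  (f g : code)         (* h<x,0> = f x ; h<x,n+1> = g <x,<n,h<x,n>>> *)
| cMu   (f : code).          (* x |-> least n with f<n,x> = 0 (all earlier defined, nonzero) *)

Inductive eval : code -> nat -> nat -> Prop :=
| ev_zero x : eval cZero x 0
| ev_succ x : eval cSucc x (S x)
| ev_fst a b : eval cFst (cpair a b) a
| ev_snd a b : eval cSnd (cpair a b) b
| ev_id x : eval cId x x
| ev_comp f g x y z : eval g x y -> eval f y z -> eval (cComp f g) x z
| ev_pair f g x a b : eval f x a -> eval g x b -> eval (cPair f g) x (cpair a b)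
| ev_rec0 f g x y : eval f x y -> eval (cRec f g) (cpair x 0) y
| ev_recS f g x n y z :
    eval (cRec f g) (cpair x n) y ->
    eval g (cpair x (cpair n y)) z ->
    eval (cRec f g) (cpair x (S n)) z
| ev_mu f x n :
    eval f (cpair n x) 0 ->
    (forall m, m < n -> exists k, eval f (cpair m x) (S k)) ->
    eval (cMu f) x n.

(** Goedel numbering of codes; this is a bijection code -> nat. *)
Fixpoint encode (c : code) : nat :=
  match c with
  | cZero => 0
  | cSucc => 1
  | cFst => 2
  | cSnd => 3
  | cId => 4
  | cComp f g => 5 + 4 * cpair (encode f) (encode g)
  | cPair f g => 6 + 4 * cpair (encode f) (encode g)
  | cRec f g => 7 + 4 * cpair (encode f) (encode g)
  | cMu f => 8 + 4 * encode f
  end.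

Definition psi (e x y : nat) : Prop :=
  exists c : code, encode c = e /\ eval c x y.

Definition W (e x : nat) : Prop := exists y, psi e x y.

Definition computable (f : nat -> nat) : Prop :=
  exists c : nat, forall n, psi c n (f n).

(** The proof has three ingredients.
    - A normal form for [W]: [x] is in [W e] iff there is a number coding a
      halting trace of the code [e] on [x], and "[t] codes a halting trace" is
      expressed by a formula with bounded quantifiers.  Such formulas are
      decided by codes, so the unbounded search for a witness of a bounded
      formula is a code whose domain is the projection of the formula.
    - Self-reference without the recursion theorem: the index [hindex j x] of
      the search for a formula with parameters [j] and [x] is a computable
      function of them.  Searching, with its own index as parameter, for
      "[z = hindex j y] with [y > x] and [y] in [K]" gives indices [tail x]
      with [W (tail x) = { tail y | y in K, y > x }], [tail] increasing.
    - With [enum_K] the increasing enumeration of the halting set [K], the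
      sequence [e n = tail (enum_K n)] has the required domains; if it were
      computable, [i] not in [K] would be decided by a bounded search among
      [e 0, ..., e (tail i)], making the complement of [K] c.e. *)

From Stdlib Require Import Arith PeanoNat Lia List Wf_nat Classical ClassicalEpsilon.
Import ListNotations.

(** * Cantor pairing *)

Lemma triangle_succ s : S s * (S s + 1) / 2 = s * (s + 1) / 2 + S s.
Proof.
  replace (S s * (S s + 1)) with (s * (s + 1) + S s * 2) by nia.
  rewrite Nat.div_add; lia.
Qed.

Lemma cpair_0_0 : cpair 0 0 = 0.
Proof. reflexivity. Qed.

(* One step down a diagonal ... *)
Lemma cpair_succ_r a b : cpair a (S b) = S (cpair (S a) b).
Proof. unfold cpair. replace (a + S b) with (S a + b) by lia. lia. Qed.

(* ... and from the end of one diagonal to the start of the next. *)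
Lemma cpair_succ_l_0 a : cpair (S a) 0 = S (cpair 0 a).
Proof. unfold cpair. rewrite !Nat.add_0_r. simpl (0 + a). rewrite triangle_succ. lia. Qed.

Lemma cpair_ge_l a b : a <= cpair a b.
Proof.
  unfold cpair.
  assert (a + b <= (a + b) * (a + b + 1) / 2)
    by (apply Nat.div_le_lower_bound; nia).
  lia.
Qed.

Lemma cpair_ge_r a b : b <= cpair a b.
Proof. unfold cpair. lia. Qed.

Lemma cpair_mono_l a a' b : a < a' -> cpair a b < cpair a' b.
Proof.
  assert (step : forall a, cpair a b < cpair (S a) b).
  { intro c. unfold cpair. replace (S c + b) with (S (c + b)) by lia.
    rewrite triangle_succ. lia. }
  induction 1; [apply step|]. specialize (step m). lia.
Qed.

Lemma cpair_mono_r a b b' : b < b' -> cpair a b < cpair a b'.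
Proof.
  assert (step : forall b, cpair a b < cpair a (S b)).
  { intro c. rewrite cpair_succ_r. unfold cpair.
    assert ((a + c) * (a + c + 1) / 2 <= (S a + c) * (S a + c + 1) / 2)
      by (apply Nat.Div0.div_le_mono; nia).
    lia. }
  induction 1; [apply step|]. specialize (step m). lia.
Qed.

Fixpoint unpair (n : nat) : nat * nat :=
  match n with
  | 0 => (0, 0)
  | S m => let (a, b) := unpair m in
           match a with 0 => (S b, 0) | S a' => (a', S b) end
  end.

Definition pfst n := fst (unpair n).
Definition psnd n := snd (unpair n).

Lemma cpair_unpair n : cpair (pfst n) (psnd n) = n.
Proof.
  unfold pfst, psnd. induction n as [|n IH]; [reflexivity|].
  simpl. destruct (unpair n) as [[|a] b]; simpl in *.
  - rewrite cpair_succ_l_0. congruence.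
  - rewrite cpair_succ_r. congruence.
Qed.

Lemma unpair_cpair a b : unpair (cpair a b) = (a, b).
Proof.
  remember (cpair a b) as n eqn:Hn. revert a b Hn.
  induction n as [|n IH]; intros a b Hn.
  - pose proof (cpair_ge_l a b). pose proof (cpair_ge_r a b).
    assert (a = 0) by lia. assert (b = 0) by lia. subst; reflexivity.
  - destruct b as [|b]; [destruct a as [|a]|].
    + rewrite cpair_0_0 in Hn. discriminate.
    + rewrite cpair_succ_l_0 in Hn. injection Hn as Hn. simpl. now rewrite (IH 0 a Hn).
    + rewrite cpair_succ_r in Hn. injection Hn as Hn. simpl. now rewrite (IH (S a) b Hn).
Qed.

Lemma pfst_cpair a b : pfst (cpair a b) = a.
Proof. unfold pfst. now rewrite unpair_cpair. Qed.

Lemma psnd_cpair a b : psnd (cpair a b) = b.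
Proof. unfold psnd. now rewrite unpair_cpair. Qed.

Lemma cpair_inj a b a' b' : cpair a b = cpair a' b' -> a = a' /\ b = b'.
Proof.
  intro H. split.
  - now rewrite <- (pfst_cpair a b), H, pfst_cpair.
  - now rewrite <- (psnd_cpair a b), H, psnd_cpair.
Qed.

(** * The numbering of codes *)

Lemma encode_inj c1 c2 : encode c1 = encode c2 -> c1 = c2.
Proof.
  revert c2; induction c1; destruct c2; simpl; intro H; try lia; try reflexivity.
  1-3: assert (Hp : cpair (encode c1_1) (encode c1_2)
                    = cpair (encode c2_1) (encode c2_2)) by lia;
       apply cpair_inj in Hp as [H1 H2]; f_equal; auto.
  f_equal. apply IHc1. lia.
Qed.

Lemma encode_surj n : exists c, encode c = n.
Proof.
  induction n as [n IH] using (well_founded_induction lt_wf).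
  destruct (le_lt_dec n 4) as [Hn|Hn].
  { destruct n as [|[|[|[|[|n]]]]]; try lia.
    - now exists cZero.
    - now exists cSucc.
    - now exists cFst.
    - now exists cSnd.
    - now exists cId. }
  set (k := (n - 5) / 4). set (r := (n - 5) mod 4).
  assert (Hd : n - 5 = 4 * k + r) by (apply Nat.div_mod; lia).
  assert (Hr : r < 4) by (apply Nat.mod_upper_bound; lia).
  pose proof (cpair_ge_l (pfst k) (psnd k)). pose proof (cpair_ge_r (pfst k) (psnd k)).
  rewrite cpair_unpair in *.
  destruct (IH k) as [c0 E0]; [lia|].
  destruct (IH (pfst k)) as [c1 E1]; [lia|].
  destruct (IH (psnd k)) as [c2 E2]; [lia|].
  destruct r as [|[|[|[|r]]]]; try lia.
  - exists (cComp c1 c2). simpl. rewrite E1, E2, cpair_unpair. lia.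
  - exists (cPair c1 c2). simpl. rewrite E1, E2, cpair_unpair. lia.
  - exists (cRec c1 c2). simpl. rewrite E1, E2, cpair_unpair. lia.
  - exists (cMu c0). simpl. rewrite E0. lia.
Qed.

Lemma psi_encode c x y : psi (encode c) x y <-> eval c x y.
Proof.
  split.
  - intros [c' [E H]]. now apply encode_inj in E as <-.
  - intro H. now exists c.
Qed.

(* Induction on evaluations whose [cMu] case also gets the induction
   hypothesis for the (nonzero) values below the least zero. *)
Lemma eval_strong_ind (P : code -> nat -> nat -> Prop)
  (H0 : forall x, P cZero x 0)
  (H1 : forall x, P cSucc x (S x))
  (H2 : forall a b, P cFst (cpair a b) a)
  (H3 : forall a b, P cSnd (cpair a b) b)
  (H4 : forall x, P cId x x)
  (H5 : forall f g x y z, eval g x y -> P g x y -> eval f y z -> P f y z ->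
        P (cComp f g) x z)
  (H6 : forall f g x a b, eval f x a -> P f x a -> eval g x b -> P g x b ->
        P (cPair f g) x (cpair a b))
  (H7 : forall f g x y, eval f x y -> P f x y -> P (cRec f g) (cpair x 0) y)
  (H8 : forall f g x n y z,
        eval (cRec f g) (cpair x n) y -> P (cRec f g) (cpair x n) y ->
        eval g (cpair x (cpair n y)) z -> P g (cpair x (cpair n y)) z ->
        P (cRec f g) (cpair x (S n)) z)
  (H9 : forall f x n, eval f (cpair n x) 0 -> P f (cpair n x) 0 ->
        (forall m, m < n -> exists k, eval f (cpair m x) (S k) /\ P f (cpair m x) (S k)) ->
        P (cMu f) x n) :
  forall c x y, eval c x y -> P c x y.
Proof.
  fix IH 4. intros c x y H. destruct H as [| | | | | | | | |f x n Hf Hall].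
  1-5: auto.
  1-4: eauto.
  apply H9; auto. intros m Hm. destruct (Hall m Hm) as [k Hk].
  exists k. split; [exact Hk|exact (IH _ _ _ Hk)].
Qed.

Ltac cpair_injection := repeat match goal with
  | H : cpair _ _ = cpair _ _ |- _ => apply cpair_inj in H as [? ?]; subst
  end.

Lemma eval_det c x y : eval c x y -> forall y', eval c x y' -> y = y'.
Proof.
  revert c x y. apply (eval_strong_ind (fun c x y => forall y', eval c x y' -> y = y')).
  1-5: intros; match goal with H : eval _ _ _ |- _ => inversion H end;
       cpair_injection; auto.
  - intros f g x y z _ IHg _ IHf y' H; inversion H; subst.
    match goal with H1 : eval g x ?w |- _ => apply IHg in H1; subst end. auto.
  - intros f g x a b _ IHf _ IHg y' H; inversion H; subst. f_equal; auto.
  - intros f g x y _ IHf y' H; inversion H; cpair_injection; auto. discriminate.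
  - intros f g x n y z _ IHr _ IHg y' H; inversion H; cpair_injection; try discriminate.
    match goal with H : S _ = S _ |- _ => injection H as H; subst end.
    match goal with H1 : eval (cRec f g) _ ?w |- _ => apply IHr in H1; subst end. auto.
  - intros f x n _ IHf Hall y' H; inversion H; subst.
    destruct (Nat.lt_trichotomy n y') as [Hl|[Hl|Hl]]; auto.
    + match goal with H1 : forall m, m < y' -> _ |- _ => destruct (H1 n Hl) as [k Hk] end.
      apply IHf in Hk. discriminate.
    + destruct (Hall y' Hl) as [k [_ IHk]].
      match goal with H1 : eval f (cpair y' x) 0 |- _ => apply IHk in H1 end. discriminate.
Qed.

(** * Codes for total functions *)

Definition computes (c : code) (f : nat -> nat) : Prop := forall x, eval c x (f x).
Definition computes2 (c : code) (f : nat -> nat -> nat) : Prop :=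
  forall a b, eval c (cpair a b) (f a b).

Lemma cSucc_ok : computes cSucc S.
Proof. intro; constructor. Qed.

Lemma cFst_ok : computes cFst pfst.
Proof. intro x. rewrite <- (cpair_unpair x) at 1. apply ev_fst. Qed.

Lemma cSnd_ok : computes cSnd psnd.
Proof. intro x. rewrite <- (cpair_unpair x) at 1. apply ev_snd. Qed.

Fixpoint cConst (n : nat) : code :=
  match n with 0 => cZero | S n => cComp cSucc (cConst n) end.

Lemma cConst_ok n : computes (cConst n) (fun _ => n).
Proof. intro x. induction n; simpl; econstructor; eauto; constructor. Qed.

(* Inside the step function of a recursion, the argument is <x, <n, h>>. *)
Lemma eval_rec_counter x n h : eval (cComp cFst cSnd) (cpair x (cpair n h)) n.
Proof. econstructor; constructor. Qed.

Lemma eval_rec_previous x n h : eval (cComp cSnd cSnd) (cpair x (cpair n h)) h.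
Proof. econstructor; constructor. Qed.

Definition cAdd : code := cRec cId (cComp cSucc (cComp cSnd cSnd)).

Lemma cAdd_ok : computes2 cAdd Nat.add.
Proof.
  intros a n. induction n.
  - rewrite Nat.add_0_r. repeat constructor.
  - rewrite Nat.add_succ_r. econstructor; [eauto|].
    econstructor; [apply eval_rec_previous|constructor].
Qed.

Definition cPred : code := cComp (cRec cZero (cComp cFst cSnd)) (cPair cZero cId).

Lemma cPred_ok : computes cPred Nat.pred.
Proof.
  intro x. econstructor; [repeat constructor|].
  induction x; [repeat constructor|]. econstructor; [eauto|apply eval_rec_counter].
Qed.

Definition cSub : code := cRec cId (cComp cPred (cComp cSnd cSnd)).

Lemma cSub_ok : computes2 cSub Nat.sub.
Proof.
  intros a n. induction n.
  - rewrite Nat.sub_0_r. repeat constructor.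
  - replace (a - S n) with (Nat.pred (a - n)) by lia.
    econstructor; [eauto|]. econstructor; [apply eval_rec_previous|apply cPred_ok].
Qed.

Definition cMul : code := cRec cZero (cComp cAdd (cPair (cComp cSnd cSnd) cFst)).

Lemma cMul_ok : computes2 cMul Nat.mul.
Proof.
  intros a n. induction n.
  - rewrite Nat.mul_0_r. repeat constructor.
  - replace (a * S n) with (a * n + a) by lia. econstructor; [eauto|].
    econstructor; [constructor; [apply eval_rec_previous|constructor]|apply cAdd_ok].
Qed.

Fixpoint triangle (s : nat) : nat := match s with 0 => 0 | S n => S (triangle n + n) end.

Lemma triangle_eq s : triangle s = s * (s + 1) / 2.
Proof. induction s; [reflexivity|]. rewrite triangle_succ. simpl triangle. lia. Qed.

Definition cTriangle : code :=
  cComp (cRec cZero (cComp cSucc (cComp cAdd (cPair (cComp cSnd cSnd) (cComp cFst cSnd)))))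
        (cPair cZero cId).

Lemma cTriangle_ok : computes cTriangle triangle.
Proof.
  intro s. econstructor; [repeat constructor|].
  induction s; [repeat constructor|]. econstructor; [eauto|].
  econstructor; [|constructor]. econstructor; [|apply cAdd_ok].
  constructor; [apply eval_rec_previous|apply eval_rec_counter].
Qed.

Definition cCpair : code := cComp cAdd (cPair (cComp cTriangle cAdd) cSnd).

Lemma cCpair_ok : computes2 cCpair cpair.
Proof.
  intros a b. apply (ev_comp _ _ _ (cpair (triangle (a + b)) b)).
  - constructor; [|constructor]. econstructor; [apply cAdd_ok|apply cTriangle_ok].
  - replace (cpair a b) with (triangle (a + b) + b)
      by (unfold cpair; now rewrite triangle_eq). apply cAdd_ok.
Qed.

(* [drop s j] strips the first [j] entries off a list coded by nested pairs. *)
Definition drop (s j : nat) : nat := Nat.iter j psnd s.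

Definition cDrop : code := cRec cId (cComp cSnd (cComp cSnd cSnd)).

Lemma cDrop_ok : computes2 cDrop drop.
Proof.
  intros s n. induction n; [repeat constructor|].
  econstructor; [eauto|]. econstructor; [apply eval_rec_previous|apply cSnd_ok].
Qed.

(** * Bounded formulas and their compilation

    Formulas with bounded quantifiers over terms built from total computable
    functions are decidable by a code: the code [formula_code A] computes a
    "truth value" that is [0] exactly when [A] holds.  Consequently the
    unbounded search [cMu (formula_code A)] halts exactly when [A] has a
    witness.  Variables are de Bruijn indices into an environment list, which
    the codes receive as nested Cantor pairs. *)

Inductive term : Type :=
| Var (k : nat)
| Cst (n : nat)
| App1 (c : code) (f : nat -> nat) (t : term)
| App2 (c : code) (f : nat -> nat -> nat) (t1 t2 : term).

Inductive formula : Type :=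
| FEq (t1 t2 : term)
| FAnd (A B : formula)
| FOr (A B : formula)
| FNot (A : formula)
| FAll (t : term) (A : formula)
| FEx (t : term) (A : formula).

Fixpoint teval (t : term) (l : list nat) : nat :=
  match t with
  | Var k => nth k l 0
  | Cst n => n
  | App1 _ f t => f (teval t l)
  | App2 _ f t1 t2 => f (teval t1 l) (teval t2 l)
  end.

Fixpoint holds (A : formula) (l : list nat) : Prop :=
  match A with
  | FEq t1 t2 => teval t1 l = teval t2 l
  | FAnd A B => holds A l /\ holds B l
  | FOr A B => holds A l \/ holds B l
  | FNot A => ~ holds A l
  | FAll t A => forall j, j < teval t l -> holds A (j :: l)
  | FEx t A => exists j, j < teval t l /\ holds A (j :: l)
  end.

Fixpoint term_ok (t : term) : Prop :=
  match t with
  | Var _ | Cst _ => True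
  | App1 c f t => computes c f /\ term_ok t
  | App2 c f t1 t2 => computes2 c f /\ term_ok t1 /\ term_ok t2
  end.

Fixpoint formula_ok (A : formula) : Prop :=
  match A with
  | FEq t1 t2 => term_ok t1 /\ term_ok t2
  | FAnd A B | FOr A B => formula_ok A /\ formula_ok B
  | FNot A => formula_ok A
  | FAll t A | FEx t A => term_ok t /\ formula_ok A
  end.

Fixpoint lift (t : term) : term :=
  match t with
  | Var k => Var (S k)
  | Cst n => Cst n
  | App1 c f t => App1 c f (lift t)
  | App2 c f t1 t2 => App2 c f (lift t1) (lift t2)
  end.

Fixpoint bsum (f : nat -> nat) (n : nat) : nat :=
  match n with 0 => 0 | S n => bsum f n + f n end.
Fixpoint bprod (f : nat -> nat) (n : nat) : nat :=
  match n with 0 => 1 | S n => bprod f n * f n end.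

Lemma bsum_zero f n : bsum f n = 0 <-> forall j, j < n -> f j = 0.
Proof.
  induction n; simpl; [split; intros; auto; lia|].
  rewrite Nat.eq_add_0, IHn. split.
  - intros [H Hn] j Hj. destruct (Nat.eq_dec j n); subst; auto. apply H; lia.
  - intro H. split; [intros; apply H|]; auto.
Qed.

Lemma bprod_zero f n : bprod f n = 0 <-> exists j, j < n /\ f j = 0.
Proof.
  induction n; simpl; [split; [lia|intros [j [Hj _]]; lia]|].
  rewrite Nat.mul_eq_0, IHn. split.
  - intros [[j [Hj H]]|H]; [exists j|exists n]; split; auto; lia.
  - intros [j [Hj H]]. destruct (Nat.eq_dec j n); subst; auto.
    left; exists j; split; auto; lia.
Qed.

(* The truth value of a formula: [0] means true. *)
Fixpoint truth_value (A : formula) (l : list nat) : nat :=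
  match A with
  | FEq t1 t2 => (teval t1 l - teval t2 l) + (teval t2 l - teval t1 l)
  | FAnd A B => truth_value A l + truth_value B l
  | FOr A B => truth_value A l * truth_value B l
  | FNot A => 1 - truth_value A l
  | FAll t A => bsum (fun j => truth_value A (j :: l)) (teval t l)
  | FEx t A => bprod (fun j => truth_value A (j :: l)) (teval t l)
  end.

Lemma truth_value_zero A : forall l, truth_value A l = 0 <-> holds A l.
Proof.
  induction A; intro l; simpl.
  - lia.
  - rewrite <- IHA1, <- IHA2. lia.
  - rewrite <- IHA1, <- IHA2. lia.
  - rewrite <- IHA. destruct (truth_value A l); simpl; split; intro H; lia.
  - rewrite bsum_zero. split; intros H j Hj; apply IHA; auto.
  - rewrite bprod_zero. split; intros [j [Hj H]]; exists j; split; auto; apply IHA; auto.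
Qed.

Fixpoint enc_list (l : list nat) : nat :=
  match l with [] => 0 | v :: r => cpair v (enc_list r) end.

Lemma eval_snd_enc_list l : eval cSnd (enc_list l) (enc_list (tl l)).
Proof. destruct l; simpl; [rewrite <- cpair_0_0 at 1|]; constructor. Qed.

Fixpoint var_code (k : nat) : code :=
  match k with 0 => cFst | S k => cComp (var_code k) cSnd end.

Lemma var_code_ok k : forall l, eval (var_code k) (enc_list l) (nth k l 0).
Proof.
  induction k; intro l.
  - destruct l; simpl; [rewrite <- cpair_0_0 at 1|]; constructor.
  - simpl. econstructor; [apply eval_snd_enc_list|].
    replace (nth (S k) l 0) with (nth k (tl l) 0) by (destruct l, k; auto). apply IHk.
Qed.

Fixpoint term_code (t : term) : code :=
  match t with
  | Var k => var_code k
  | Cst n => cConst n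
  | App1 c _ t => cComp c (term_code t)
  | App2 c _ t1 t2 => cComp c (cPair (term_code t1) (term_code t2))
  end.

Lemma term_code_ok t : term_ok t -> forall l, eval (term_code t) (enc_list l) (teval t l).
Proof.
  induction t; simpl; intros H l.
  - apply var_code_ok.
  - apply cConst_ok.
  - destruct H as [Hc Ht]. econstructor; [apply IHt|apply Hc]; auto.
  - destruct H as [Hc [H1 H2]]. econstructor; [constructor; [apply IHt1|apply IHt2]|apply Hc]; auto.
Qed.

Definition cDist : code := cComp cAdd (cPair cSub (cComp cSub (cPair cSnd cFst))).

Lemma cDist_ok : computes2 cDist (fun a b => (a - b) + (b - a)).
Proof.
  intros a b. econstructor; [|apply cAdd_ok].
  constructor; [apply cSub_ok|]. econstructor; [repeat constructor|apply cSub_ok].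
Qed.

(* Iterating a binary operation [op] over the values of [body] below a bound,
   starting from [start]; used for bounded quantifiers. *)
Definition cIterate (start : nat) (op body : code) : code :=
  cRec (cConst start)
       (cComp op (cPair (cComp cSnd cSnd) (cComp body (cPair (cComp cFst cSnd) cFst)))).

Definition cBounded (start : nat) (op body bound : code) : code :=
  cComp (cIterate start op body) (cPair cId bound).

Lemma cIterate_ok start op body F F' l (Hop : computes2 op F)
  (Hbody : forall j, eval body (enc_list (j :: l)) (F' j))
  (G : nat -> nat) (G0 : G 0 = start) (GS : forall n, G (S n) = F (G n) (F' n)) n :
  eval (cIterate start op body) (cpair (enc_list l) n) (G n).
Proof.
  induction n.
  - rewrite G0. constructor. apply cConst_ok.
  - rewrite GS. econstructor; [apply IHn|]. econstructor; [|apply Hop].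
    constructor; [apply eval_rec_previous|].
    econstructor; [|apply (Hbody n)]. constructor; [apply eval_rec_counter|constructor].
Qed.

Fixpoint formula_code (A : formula) : code :=
  match A with
  | FEq t1 t2 => cComp cDist (cPair (term_code t1) (term_code t2))
  | FAnd A B => cComp cAdd (cPair (formula_code A) (formula_code B))
  | FOr A B => cComp cMul (cPair (formula_code A) (formula_code B))
  | FNot A => cComp cSub (cPair (cConst 1) (formula_code A))
  | FAll t A => cBounded 0 cAdd (formula_code A) (term_code t)
  | FEx t A => cBounded 1 cMul (formula_code A) (term_code t)
  end.

Lemma formula_code_ok A : formula_ok A ->
  forall l, eval (formula_code A) (enc_list l) (truth_value A l).
Proof.
  induction A; simpl; intros H l.
  - destruct H. econstructor; [constructor; apply term_code_ok; auto|apply cDist_ok].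
  - destruct H. econstructor; [constructor; [apply IHA1|apply IHA2]; auto|apply cAdd_ok].
  - destruct H. econstructor; [constructor; [apply IHA1|apply IHA2]; auto|apply cMul_ok].
  - apply (ev_comp _ _ _ (cpair 1 (truth_value A l))); [|apply cSub_ok].
    constructor; [apply (cConst_ok 1)|auto].
  - destruct H. econstructor; [constructor; [constructor|apply term_code_ok; auto]|].
    apply cIterate_ok with (F := Nat.add) (F' := fun j => truth_value A (j :: l));
      auto using cAdd_ok.
  - destruct H. econstructor; [constructor; [constructor|apply term_code_ok; auto]|].
    apply cIterate_ok with (F := Nat.mul) (F' := fun j => truth_value A (j :: l));
      auto using cMul_ok.
Qed.

Lemma least_witness (P : nat -> Prop) n :
  P n -> exists m, P m /\ forall k, k < m -> ~ P k.
Proof.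
  intro Hn. destruct (dec_inh_nat_subset_has_unique_least_element P)
    as [m [[Hm Hleast] _]]; [intro; apply classic|now exists n|].
  exists m. split; auto. intros k Hk Pk. specialize (Hleast k Pk). lia.
Qed.

Lemma eval_search A l v : formula_ok A ->
  eval (cMu (formula_code A)) (enc_list l) v <->
  holds A (v :: l) /\ forall m, m < v -> ~ holds A (m :: l).
Proof.
  intro HA. pose proof (formula_code_ok A HA) as HC. split.
  - intro H. inversion H as [| | | | | | | | |? ? ? Hv Hbelow]; subst. split.
    + apply truth_value_zero. eapply eval_det; [apply (HC (v :: l))|exact Hv].
    + intros m Hm Hh. destruct (Hbelow m Hm) as [k Hk]. apply truth_value_zero in Hh.
      pose proof (eval_det _ _ _ (HC (m :: l)) _ Hk). lia.
  - intros [Hv Hbelow]. constructor.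
    + apply truth_value_zero in Hv. rewrite <- Hv. apply (HC (v :: l)).
    + intros m Hm. specialize (Hbelow m Hm).
      destruct (truth_value A (m :: l)) as [|k] eqn:E.
      * exfalso; apply Hbelow, truth_value_zero; auto.
      * exists k. rewrite <- E. apply (HC (m :: l)).
Qed.

Lemma search_halts A l : formula_ok A ->
  (exists v, eval (cMu (formula_code A)) (enc_list l) v) <-> exists n, holds A (n :: l).
Proof.
  intro HA. split.
  - intros [v H]. apply eval_search in H; auto. exists v; tauto.
  - intros [n Hn]. destruct (least_witness (fun n => holds A (n :: l)) n Hn) as [m Hm].
    exists m. apply eval_search; auto.
Qed.

(** * Computation traces

    A trace is a finite set of entries, each claiming "code [c] maps [x] to
    [y]" and carrying a tag and an argument recording how the claim follows
    from other entries.  An entry is justified when its claim is an axiom of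
    the big-step semantics or follows by one rule from entries of the trace.
    Every claim of a trace of justified entries is true (soundness), and every
    true claim appears in such a trace (completeness).  The quantifier "some
    entry of the trace satisfies ..." is abstracted as [Ex], so the same
    definitions serve for traces given as lists and as numbers. *)

Definition entry (c x y r k : nat) : nat := cpair c (cpair x (cpair y (cpair r k))).
Definition ent_code (e : nat) : nat := pfst e.
Definition ent_in (e : nat) : nat := pfst (psnd e).
Definition ent_out (e : nat) : nat := pfst (psnd (psnd e)).
Definition ent_tag (e : nat) : nat := pfst (psnd (psnd (psnd e))).
Definition ent_arg (e : nat) : nat := psnd (psnd (psnd (psnd e))).

#[local] Hint Rewrite pfst_cpair psnd_cpair : cpair.

Ltac entry_simpl :=
  unfold entry, ent_code, ent_in, ent_out, ent_tag, ent_arg in *;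
  autorewrite with cpair in *.

Definition records (Ex : (nat -> Prop) -> Prop) (c x y : nat) : Prop :=
  Ex (fun e => ent_code e = c /\ ent_in e = x /\ ent_out e = y).

Definition atomic_step (c x y : nat) : Prop :=
  (c = 0 /\ y = 0) \/ (c = 1 /\ y = S x) \/ (c = 2 /\ y = pfst x) \/
  (c = 3 /\ y = psnd x) \/ (c = 4 /\ y = x).

Definition comp_step Ex (f g x z : nat) : Prop :=
  Ex (fun e => ent_code e = g /\ ent_in e = x /\ records Ex f (ent_out e) z).

Definition pair_step Ex (f g x y : nat) : Prop :=
  records Ex f x (pfst y) /\ records Ex g x (psnd y).

Definition rec_step Ex (c f g x y : nat) : Prop :=
  (psnd x = 0 /\ records Ex f (pfst x) y) \/
  (psnd x <> 0 /\
   Ex (fun e => ent_code e = c /\ ent_in e = cpair (pfst x) (psnd x - 1) /\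
        records Ex g (cpair (pfst x) (cpair (psnd x - 1) (ent_out e))) y)).

Definition mu_step Ex (f x y : nat) : Prop :=
  records Ex f (cpair y x) 0 /\
  forall m, m < y -> Ex (fun e => ent_code e = f /\ ent_in e = cpair m x /\ ent_out e <> 0).

Definition compound_step Ex (c x y r k : nat) : Prop :=
  c = 5 + (r + 4 * k) /\
  ((r = 0 /\ comp_step Ex (pfst k) (psnd k) x y) \/
   (r = 1 /\ pair_step Ex (pfst k) (psnd k) x y) \/
   (r = 2 /\ rec_step Ex c (pfst k) (psnd k) x y) \/
   (r = 3 /\ mu_step Ex k x y)).

Definition justified Ex (e : nat) : Prop :=
  atomic_step (ent_code e) (ent_in e) (ent_out e) \/
  compound_step Ex (ent_code e) (ent_in e) (ent_out e) (ent_tag e) (ent_arg e).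

Definition step_for Ex (c : code) (x y : nat) : Prop :=
  match c with
  | cZero => y = 0
  | cSucc => y = S x
  | cFst => y = pfst x
  | cSnd => y = psnd x
  | cId => y = x
  | cComp f g => comp_step Ex (encode f) (encode g) x y
  | cPair f g => pair_step Ex (encode f) (encode g) x y
  | cRec f g => rec_step Ex (encode (cRec f g)) (encode f) (encode g) x y
  | cMu f => mu_step Ex (encode f) x y
  end.

Lemma justified_step Ex e c :
  justified Ex e -> ent_code e = encode c -> step_for Ex c (ent_in e) (ent_out e).
Proof.
  intros [A|[Hc C]] He; rewrite He in *; clear He.
  { unfold atomic_step in A. destruct c; simpl in *; lia. }
  destruct c; simpl in *; try lia.
  all: destruct C as [[Hr S]|[[Hr S]|[[Hr S]|[Hr S]]]]; rewrite Hr in *; try lia.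
  1-3: assert (Hk : ent_arg e = cpair (encode c1) (encode c2)) by lia;
       rewrite Hk, pfst_cpair, psnd_cpair in S; exact S.
  assert (Hk : ent_arg e = encode c) by lia. now rewrite Hk in S.
Qed.

Definition tag_of (c : code) : nat :=
  match c with cPair _ _ => 1 | cRec _ _ => 2 | cMu _ => 3 | _ => 0 end.

Definition arg_of (c : code) : nat :=
  match c with
  | cComp f g | cPair f g | cRec f g => cpair (encode f) (encode g)
  | cMu f => encode f
  | _ => 0
  end.

Definition entry_for (c : code) (x y : nat) : nat :=
  entry (encode c) x y (tag_of c) (arg_of c).

Lemma step_justified Ex c x y : step_for Ex c x y -> justified Ex (entry_for c x y).
Proof.
  unfold justified, entry_for, atomic_step, compound_step.
  destruct c; cbn [encode tag_of arg_of step_for]; intro S; entry_simpl.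
  1-5: left; lia.
  all: right; split; [lia|tauto].
Qed.

Section Soundness.

Variable M : nat -> Prop.
Variable Ex : (nat -> Prop) -> Prop.
Hypothesis Ex_in_M : forall Q, Ex Q -> exists e, M e /\ Q e.
Hypothesis M_justified : forall e, M e -> justified Ex e.

Definition sound_for (c : code) : Prop :=
  forall e, M e -> ent_code e = encode c -> eval c (ent_in e) (ent_out e).

Lemma records_sound c x y : sound_for c -> records Ex (encode c) x y -> eval c x y.
Proof. intros Hc HR. apply Ex_in_M in HR as [e [Me [Ec [<- <-]]]]. auto. Qed.

Lemma rec_sound f g : sound_for f -> sound_for g -> sound_for (cRec f g).
Proof.
  intros Hf Hg.
  enough (H : forall n e, M e -> ent_code e = encode (cRec f g) -> psnd (ent_in e) = n ->
                          eval (cRec f g) (ent_in e) (ent_out e)).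
  { intros e Me Ec. eapply H; eauto. }
  induction n; intros e Me Ec Hn;
    pose proof (justified_step _ _ _ (M_justified e Me) Ec) as S; unfold step_for, rec_step in S;
    rewrite <- (cpair_unpair (ent_in e)), Hn; rewrite Hn in S.
  - destruct S as [[_ R]|[? _]]; [|lia]. constructor. now apply records_sound.
  - destruct S as [[? _]|[_ S]]; [lia|].
    apply Ex_in_M in S as [e1 [Me1 [Ec1 [Ein1 R]]]]. simpl in Ein1, R.
    rewrite Nat.sub_0_r in Ein1, R. econstructor.
    + rewrite <- Ein1. apply IHn; auto. now rewrite Ein1, psnd_cpair.
    + now apply records_sound.
Qed.

Theorem trace_sound c : sound_for c.
Proof.
  induction c; try (apply rec_sound; assumption); intros e Me Ec;
    pose proof (justified_step _ _ _ (M_justified e Me) Ec) as S; simpl in S.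
  1-5: rewrite S; auto using cSucc_ok, cFst_ok, cSnd_ok; constructor.
  - apply Ex_in_M in S as [e1 [Me1 [Ec1 [Ein1 R]]]].
    econstructor; [rewrite <- Ein1; now apply IHc2|now apply records_sound].
  - destruct S as [R1 R2]. rewrite <- (cpair_unpair (ent_out e)).
    constructor; now apply records_sound.
  - destruct S as [R Hbelow]. constructor; [now apply records_sound|].
    intros m Hm. apply Hbelow, Ex_in_M in Hm as [e1 [Me1 [Ec1 [Ein1 Hnz]]]].
    destruct (ent_out e1) as [|k] eqn:E; [lia|]. exists k.
    rewrite <- Ein1, <- E. auto.
Qed.

End Soundness.

Definition ExL (L : list nat) (Q : nat -> Prop) : Prop := exists e, In e L /\ Q e.

Definition valid_list (L : list nat) : Prop := forall e, In e L -> justified (ExL L) e.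

Lemma justified_mono Ex1 Ex2 e
  (H12 : forall Q, Ex1 Q -> Ex2 Q)
  (Hmono : forall Q1 Q2 : nat -> Prop, (forall e, Q1 e -> Q2 e) -> Ex2 Q1 -> Ex2 Q2) :
  justified Ex1 e -> justified Ex2 e.
Proof.
  assert (HR : forall c x y, records Ex1 c x y -> records Ex2 c x y) by (intros c x y; apply H12).
  unfold justified, compound_step, comp_step, pair_step, rec_step, mu_step.
  intros [A|[Hc C]]; [now left|right; split; [exact Hc|]].
  destruct C as [[Hr S]|[[Hr [S1 S2]]|[[Hr S]|[Hr [S1 S2]]]]].
  - left. split; auto. apply H12 in S. revert S. apply Hmono.
    intros e' [? [? R]]. repeat split; auto.
  - right; left. auto.
  - right; right; left. split; auto. destruct S as [[? R]|[? S]]; [left; auto|right].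
    split; auto. apply H12 in S. revert S. apply Hmono.
    intros e' [? [? R]]. repeat split; auto.
  - right; right; right. auto.
Qed.

Lemma ExL_incl L1 L2 Q : incl L1 L2 -> ExL L1 Q -> ExL L2 Q.
Proof. intros H [e [He HQ]]. exists e. auto. Qed.

Lemma justified_incl L1 L2 e : incl L1 L2 -> justified (ExL L1) e -> justified (ExL L2) e.
Proof.
  intro H. apply justified_mono; [intro; now apply ExL_incl|].
  intros Q1 Q2 HQ [e' [He' Q]]. exists e'. auto.
Qed.

Lemma valid_list_app L1 L2 : valid_list L1 -> valid_list L2 -> valid_list (L1 ++ L2).
Proof.
  intros V1 V2 e He. apply in_app_or in He as [He|He].
  - apply justified_incl with L1; auto using incl_appl, incl_refl.
  - apply justified_incl with L2; auto using incl_appr, incl_refl.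
Qed.

Lemma extend_trace L c x y : valid_list L ->
  step_for (ExL (entry_for c x y :: L)) c x y ->
  exists L', valid_list L' /\ records (ExL L') (encode c) x y.
Proof.
  intros V S. exists (entry_for c x y :: L). split.
  - intros e [<-|He]; [now apply step_justified|].
    apply justified_incl with L; auto using incl_tl, incl_refl.
  - exists (entry_for c x y). split; [now left|]. unfold entry_for. entry_simpl. auto.
Qed.

Lemma merge_traces n (Q : nat -> nat -> Prop) :
  (forall m, m < n -> exists L, valid_list L /\ ExL L (Q m)) ->
  exists L, valid_list L /\ forall m, m < n -> ExL L (Q m).
Proof.
  induction n; intro H.
  - exists []. split; [intros e []|intros; lia].
  - destruct IHn as [L0 [V0 H0]]; [intros; apply H; lia|].
    destruct (H n) as [L1 [V1 H1]]; [lia|].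
    exists (L0 ++ L1). split; [now apply valid_list_app|].
    intros m Hm. destruct (Nat.eq_dec m n) as [->|Hne].
    + revert H1. apply ExL_incl, incl_appr, incl_refl.
    + apply ExL_incl with L0; [apply incl_appl, incl_refl|]. apply H0. lia.
Qed.

#[local] Hint Resolve incl_refl incl_tl incl_appl incl_appr : incl.

Ltac use_trace H := unfold records in *; eapply ExL_incl; [|exact H]; auto with incl.

Theorem trace_complete c x y : eval c x y ->
  exists L, valid_list L /\ records (ExL L) (encode c) x y.
Proof.
  revert c x y. apply eval_strong_ind.
  1-5: intros; apply extend_trace with []; [intros e []|simpl; now autorewrite with cpair].
  - intros f g x y z _ [L1 [V1 R1]] _ [L2 [V2 R2]].
    apply extend_trace with (L1 ++ L2); [now apply valid_list_app|].
    destruct R1 as [e1 [I1 [C1 [In1 Out1]]]]. exists e1.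
    split; [auto with incl datatypes|]. rewrite Out1. repeat split; auto. use_trace R2.
  - intros f g x a b _ [L1 [V1 R1]] _ [L2 [V2 R2]].
    apply extend_trace with (L1 ++ L2); [now apply valid_list_app|].
    simpl. unfold pair_step. rewrite pfst_cpair, psnd_cpair. split; [use_trace R1|use_trace R2].
  - intros f g x y _ [L1 [V1 R1]].
    apply extend_trace with L1; auto. left. rewrite pfst_cpair, psnd_cpair.
    split; [reflexivity|use_trace R1].
  - intros f g x n y z _ [L1 [V1 R1]] _ [L2 [V2 R2]].
    apply extend_trace with (L1 ++ L2); [now apply valid_list_app|].
    right. rewrite pfst_cpair, psnd_cpair. simpl (S n - 1). rewrite Nat.sub_0_r.
    split; [lia|]. destruct R1 as [e1 [I1 [C1 [In1 Out1]]]]. exists e1.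
    split; [auto with incl datatypes|]. rewrite Out1. repeat split; auto. use_trace R2.
  - intros f x n _ [L1 [V1 R1]] Hbelow.
    destruct (merge_traces n (fun m e => ent_code e = encode f /\ ent_in e = cpair m x /\
                                         ent_out e <> 0)) as [L0 [V0 H0]].
    { intros m Hm. destruct (Hbelow m Hm) as [k [_ [L [V [e [I [C [In Out]]]]]]]].
      exists L. split; auto. exists e. rewrite Out. auto. }
    apply extend_trace with (L1 ++ L0); [now apply valid_list_app|].
    split; [use_trace R1|]. intros m Hm. use_trace (H0 m Hm).
Qed.

(** * Traces coded by numbers: a normal form for [W]

    A list [L] of entries is coded by [cpair (length L) (enc_list L)]; its
    [j]-th entry is then [entry_at t j].  Since [W e x] holds iff some valid
    trace records a claim "code [e] on input [x] converges", the sets [W e]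
    are uniformly the projections of a relation expressed by a bounded
    formula. *)

Definition entry_at (t j : nat) : nat := pfst (drop (psnd t) j).

Definition ExT (t : nat) (Q : nat -> Prop) : Prop := exists j, j < pfst t /\ Q (entry_at t j).

Definition valid_trace (t : nat) : Prop :=
  forall j, j < pfst t -> justified (ExT t) (entry_at t j).

Definition halting_trace (c x t : nat) : Prop :=
  valid_trace t /\ ExT t (fun e => ent_code e = c /\ ent_in e = x).

Definition trace_code (L : list nat) : nat := cpair (length L) (enc_list L).

Lemma drop_enc_list j : forall L, drop (enc_list L) j = enc_list (skipn j L).
Proof.
  induction j; intro L; [reflexivity|].
  unfold drop. rewrite Nat.iter_succ_r. fold (drop (psnd (enc_list L)) j).
  destruct L; simpl.
  - rewrite <- cpair_0_0 at 1. rewrite psnd_cpair.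
    change (drop (enc_list []) j = enc_list []). now rewrite IHj, skipn_nil.
  - rewrite psnd_cpair. apply IHj.
Qed.

Lemma entry_at_trace_code L j : entry_at (trace_code L) j = nth j L 0.
Proof.
  unfold entry_at, trace_code. rewrite psnd_cpair, drop_enc_list.
  assert (Hhead : forall l, pfst (enc_list l) = nth 0 l 0).
  { intros [|v l]; simpl; [rewrite <- cpair_0_0|]; apply pfst_cpair. }
  rewrite Hhead. revert L; induction j; intros [|v L]; simpl; auto.
Qed.

Lemma ExL_ExT L Q : ExL L Q -> ExT (trace_code L) Q.
Proof.
  intros [e [He HQ]]. apply In_nth with (d := 0) in He as [j [Hj Ej]].
  exists j. rewrite entry_at_trace_code, Ej. unfold trace_code. now rewrite pfst_cpair.
Qed.

Lemma halting_trace_complete c x y : eval c x y -> exists t, halting_trace (encode c) x t.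
Proof.
  intro H. destruct (trace_complete c x y H) as [L [V R]]. exists (trace_code L). split.
  - intros j Hj. unfold trace_code in Hj. rewrite pfst_cpair in Hj.
    rewrite entry_at_trace_code. apply justified_mono with (ExL L).
    + apply ExL_ExT.
    + intros Q1 Q2 HQ [j' [Hj' Q]]. exists j'. auto.
    + apply V, nth_In. exact Hj.
  - apply ExL_ExT. destruct R as [e [He [Ec [Ein _]]]]. now exists e.
Qed.

Lemma halting_trace_sound c x t : halting_trace (encode c) x t -> exists y, eval c x y.
Proof.
  intros [V [j [Hj [Ec Ein]]]]. exists (ent_out (entry_at t j)). rewrite <- Ein.
  apply (trace_sound (fun e => exists j, j < pfst t /\ e = entry_at t j) (ExT t)); auto.
  - intros Q [j' [Hj' HQ]]. eauto.
  - intros e [j' [Hj' ->]]. auto.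
  - eauto.
Qed.

Theorem W_iff_halting_trace e x : W e x <-> exists t, halting_trace e x t.
Proof.
  destruct (encode_surj e) as [c <-]. unfold W. split.
  - intros [y Hy]. apply psi_encode in Hy. eapply halting_trace_complete; eauto.
  - intros [t Ht]. destruct (halting_trace_sound c x t Ht) as [y Hy].
    exists y. now apply psi_encode.
Qed.

(** ** The trace relation as a bounded formula *)

Definition tFst (t : term) : term := App1 cFst pfst t.
Definition tSnd (t : term) : term := App1 cSnd psnd t.
Definition tSucc (t : term) : term := App1 cSucc S t.
Definition tAdd (a b : term) : term := App2 cAdd Nat.add a b.
Definition tSub (a b : term) : term := App2 cSub Nat.sub a b.
Definition tMul (a b : term) : term := App2 cMul Nat.mul a b.
Definition tCpair (a b : term) : term := App2 cCpair cpair a b.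
Definition tDrop (a b : term) : term := App2 cDrop drop a b.

Definition tEntry (T j : term) : term := tFst (tDrop (tSnd T) j).
Definition tCode (E : term) : term := tFst E.
Definition tIn (E : term) : term := tFst (tSnd E).
Definition tOut (E : term) : term := tFst (tSnd (tSnd E)).
Definition tTag (E : term) : term := tFst (tSnd (tSnd (tSnd E))).
Definition tArg (E : term) : term := tSnd (tSnd (tSnd (tSnd E))).

(* Each formula below transcribes the predicate of the same name for the
   trace coded by the term [T]; inside a quantifier over entries, [Var 0] is
   the index of the current entry. *)
Definition records_f (T c x y : term) : formula :=
  FEx (tFst T) (FAnd (FEq (tCode (tEntry (lift T) (Var 0))) (lift c))
               (FAnd (FEq (tIn (tEntry (lift T) (Var 0))) (lift x))
                     (FEq (tOut (tEntry (lift T) (Var 0))) (lift y)))).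

Definition atomic_f (c x y : term) : formula :=
  FOr (FAnd (FEq c (Cst 0)) (FEq y (Cst 0)))
  (FOr (FAnd (FEq c (Cst 1)) (FEq y (tSucc x)))
  (FOr (FAnd (FEq c (Cst 2)) (FEq y (tFst x)))
  (FOr (FAnd (FEq c (Cst 3)) (FEq y (tSnd x)))
       (FAnd (FEq c (Cst 4)) (FEq y x))))).

Definition comp_f (T f g x z : term) : formula :=
  FEx (tFst T) (FAnd (FEq (tCode (tEntry (lift T) (Var 0))) (lift g))
               (FAnd (FEq (tIn (tEntry (lift T) (Var 0))) (lift x))
                     (records_f (lift T) (lift f) (tOut (tEntry (lift T) (Var 0))) (lift z)))).

Definition pair_f (T f g x y : term) : formula :=
  FAnd (records_f T f x (tFst y)) (records_f T g x (tSnd y)).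

Definition rec_f (T c f g x y : term) : formula :=
  FOr (FAnd (FEq (tSnd x) (Cst 0)) (records_f T f (tFst x) y))
      (FAnd (FNot (FEq (tSnd x) (Cst 0)))
            (FEx (tFst T)
               (FAnd (FEq (tCode (tEntry (lift T) (Var 0))) (lift c))
               (FAnd (FEq (tIn (tEntry (lift T) (Var 0)))
                          (tCpair (tFst (lift x)) (tSub (tSnd (lift x)) (Cst 1))))
                     (records_f (lift T) (lift g)
                        (tCpair (tFst (lift x))
                           (tCpair (tSub (tSnd (lift x)) (Cst 1)) (tOut (tEntry (lift T) (Var 0)))))
                        (lift y)))))).

Definition mu_f (T f x y : term) : formula :=
  FAnd (records_f T f (tCpair y x) (Cst 0))
       (FAll y (FEx (tFst (lift T))
          (FAnd (FEq (tCode (tEntry (lift (lift T)) (Var 0))) (lift (lift f)))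
          (FAnd (FEq (tIn (tEntry (lift (lift T)) (Var 0))) (tCpair (Var 1) (lift (lift x))))
                (FNot (FEq (tOut (tEntry (lift (lift T)) (Var 0))) (Cst 0))))))).

Definition compound_f (T c x y r k : term) : formula :=
  FAnd (FEq c (tAdd (Cst 5) (tAdd r (tMul (Cst 4) k))))
  (FOr (FAnd (FEq r (Cst 0)) (comp_f T (tFst k) (tSnd k) x y))
  (FOr (FAnd (FEq r (Cst 1)) (pair_f T (tFst k) (tSnd k) x y))
  (FOr (FAnd (FEq r (Cst 2)) (rec_f T c (tFst k) (tSnd k) x y))
       (FAnd (FEq r (Cst 3)) (mu_f T k x y))))).

Definition justified_f (T E : term) : formula :=
  FOr (atomic_f (tCode E) (tIn E) (tOut E))
      (compound_f T (tCode E) (tIn E) (tOut E) (tTag E) (tArg E)).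

Definition halting_trace_f (T c x : term) : formula :=
  FAnd (FAll (tFst T) (justified_f (lift T) (tEntry (lift T) (Var 0))))
       (FEx (tFst T) (FAnd (FEq (tCode (tEntry (lift T) (Var 0))) (lift c))
                           (FEq (tIn (tEntry (lift T) (Var 0))) (lift x)))).

(** * The self-referential family of codes

    [search_with A ps] is the code that, on input [z], searches for a witness
    [n] of [A] in the environment [n :: ps ++ [z]].  For the parameters
    [ps = [j; x]], where [j] is the index of the search itself, its index
    [hindex j x] is computable from [j] and [x], so a
    formula may mention the index of a search it parametrizes.  Taking for
    [A] the formula "[z = hindex j y] for some [y > x] with [y] in [K]" and for
    [j] the index of the search for [A] itself, we obtain indices
    [hindex j0 x] with [W (hindex j0 x) = { hindex j0 y | y in K, y > x }]. *)

Fixpoint env_code (ps : list nat) : code :=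
  match ps with
  | [] => cPair cId cZero
  | p :: ps => cPair (cConst p) (env_code ps)
  end.

Lemma env_code_ok ps z : eval (env_code ps) z (enc_list (ps ++ [z])).
Proof.
  induction ps as [|p ps IH]; simpl.
  - repeat constructor.
  - constructor; [apply cConst_ok|exact IH].
Qed.

Definition search_with (A : formula) (ps : list nat) : code :=
  cComp (cMu (formula_code A)) (env_code ps).

Lemma W_search_with A ps z : formula_ok A ->
  W (encode (search_with A ps)) z <-> exists n, holds A (n :: ps ++ [z]).
Proof.
  intro HA. rewrite <- search_halts by exact HA. unfold W.
  setoid_rewrite psi_encode. split.
  - intros [v H]. inversion H; subst. exists v.
    match goal with H1 : eval (env_code ps) z ?m |- _ =>
      rewrite (eval_det _ _ _ H1 _ (env_code_ok ps z)) in * end. assumption.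
  - intros [v H]. exists v. econstructor; [apply env_code_ok|exact H].
Qed.

Fixpoint const_index (n : nat) : nat :=
  match n with 0 => 0 | S n => 5 + 4 * cpair 1 (const_index n) end.

Lemma const_index_eq n : const_index n = encode (cConst n).
Proof. induction n; simpl; auto. rewrite IHn. lia. Qed.

Definition cConstIndex : code :=
  cComp (cRec cZero (cComp cAdd (cPair (cConst 5)
           (cComp cMul (cPair (cConst 4) (cComp cCpair (cPair (cConst 1) (cComp cSnd cSnd))))))))
        (cPair cZero cId).

Lemma cConstIndex_ok : computes cConstIndex const_index.
Proof.
  intro n. econstructor; [repeat constructor|].
  induction n; [repeat constructor|]. econstructor; [eauto|].
  econstructor; [constructor; [apply (cConst_ok 5)|]|apply cAdd_ok].
  econstructor; [constructor; [apply (cConst_ok 4)|]|apply cMul_ok].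
  econstructor; [constructor; [apply (cConst_ok 1)|apply eval_rec_previous]|apply cCpair_ok].
Qed.

Definition hindex (j x : nat) : nat :=
  5 + 4 * cpair j (6 + 4 * cpair (const_index j) (6 + 4 * cpair (const_index x) 46)).

(* Diagonalization: the search for [A], given its own index [j] as first
   parameter, has index [hindex j x]. *)
Lemma encode_search_self A x :
  encode (search_with A [encode (cMu (formula_code A)); x]) =
  hindex (encode (cMu (formula_code A))) x.
Proof.
  unfold search_with, hindex. cbn [encode env_code]. rewrite <- !const_index_eq.
  now change (6 + 4 * cpair 4 0) with 46.
Qed.

Lemma W_search_self A x z : formula_ok A ->
  W (hindex (encode (cMu (formula_code A))) x) z <->
  exists n, holds A [n; encode (cMu (formula_code A)); x; z].
Proof. intro HA. rewrite <- encode_search_self. now apply W_search_with. Qed.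

Definition tConstIndex (t : term) : term := App1 cConstIndex const_index t.

Definition tHindex (j x : term) : term :=
  tAdd (Cst 5) (tMul (Cst 4) (tCpair j (tAdd (Cst 6) (tMul (Cst 4)
    (tCpair (tConstIndex j) (tAdd (Cst 6) (tMul (Cst 4) (tCpair (tConstIndex x) (Cst 46))))))))).

#[local] Hint Resolve cFst_ok cSnd_ok cSucc_ok cAdd_ok cSub_ok cMul_ok cCpair_ok cDrop_ok
  cConstIndex_ok : computes.

(* In the environment [w; j; x; z], with [w = cpair y t]: [t] is a halting
   trace of the code [y] on input [y], [x < y], and [z = hindex j y]. *)
Definition tail_form : formula :=
  FAnd (halting_trace_f (tSnd (Var 0)) (tFst (Var 0)) (tFst (Var 0)))
       (FAnd (FEq (tSub (tSucc (Var 2)) (tFst (Var 0))) (Cst 0))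
             (FEq (Var 3) (tHindex (Var 1) (tFst (Var 0))))).

Lemma holds_tail_form w j x z : holds tail_form [w; j; x; z] <->
  halting_trace (pfst w) (pfst w) (psnd w) /\ S x - pfst w = 0 /\ z = hindex j (pfst w).
Proof. apply iff_refl. Qed.

Lemma tail_form_ok : formula_ok tail_form.
Proof. cbn. repeat split; auto with computes. Qed.

Definition K (y : nat) : Prop := W y y.

(* The index of the search for [tail_form]; it is sealed so that it is never
   computed, only used through its defining equation. *)
Lemma tail_index_exists : { j | j = encode (cMu (formula_code tail_form)) }.
Proof. now eexists. Qed.

Definition tail_index : nat := proj1_sig tail_index_exists.

Lemma tail_index_eq : tail_index = encode (cMu (formula_code tail_form)).
Proof. exact (proj2_sig tail_index_exists). Qed.

Definition tail (x : nat) : nat := hindex tail_index x.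

Theorem W_tail x z : W (tail x) z <-> exists y, K y /\ x < y /\ z = tail y.
Proof.
  unfold tail. rewrite tail_index_eq, (W_search_self tail_form x z tail_form_ok).
  rewrite <- tail_index_eq. split.
  - intros [w Hw]. destruct (proj1 (holds_tail_form w tail_index x z) Hw) as [Ht [Hx Hz]].
    exists (pfst w). repeat split; [|lia|exact Hz].
    apply W_iff_halting_trace. eauto.
  - intros [y [Ky [Hx Hz]]]. apply W_iff_halting_trace in Ky as [t Ht].
    exists (cpair y t). apply (holds_tail_form (cpair y t) tail_index x z).
    rewrite pfst_cpair, psnd_cpair. split; [exact Ht|split; [lia|exact Hz]].
Qed.

Lemma increasing_ge (f : nat -> nat) : (forall n, f n < f (S n)) -> forall n, n <= f n.
Proof. intros Hf n. induction n; [lia|]. specialize (Hf n). lia. Qed.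

Lemma const_index_mono n m : n < m -> const_index n < const_index m.
Proof.
  induction 1 as [|m _ IH]; simpl;
    [pose proof (cpair_ge_r 1 (const_index n))|pose proof (cpair_ge_r 1 (const_index m))]; lia.
Qed.

Lemma index_layer_mono k a b b' : b < b' -> k + 4 * cpair a b < k + 4 * cpair a b'.
Proof. intro H. apply (cpair_mono_r a) in H. lia. Qed.

Lemma tail_mono x y : x < y -> tail x < tail y.
Proof.
  intro H. unfold tail, hindex. apply index_layer_mono, index_layer_mono.
  apply (const_index_mono x y), (cpair_mono_l _ _ 46) in H. lia.
Qed.

Lemma tail_inj x y : tail x = tail y -> x = y.
Proof.
  intro H. destruct (Nat.lt_trichotomy x y) as [Hl|[Hl|Hl]]; auto;
    apply tail_mono in Hl; lia.
Qed.

Lemma tail_ge x : x <= tail x.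
Proof. apply increasing_ge. intro n. apply tail_mono. lia. Qed.

(** * Enumerating an infinite set in increasing order *)

Section Enumeration.

Variable P : nat -> Prop.
Hypothesis P_unbounded : forall N, exists y, N <= y /\ P y.

Lemma least_above_exists N : exists y, (N <= y /\ P y) /\ forall y', N <= y' -> y' < y -> ~ P y'.
Proof.
  destruct (P_unbounded N) as [y Hy].
  destruct (least_witness (fun y => N <= y /\ P y) y Hy) as [m [Hm Hleast]].
  exists m. split; auto. intros y' H1 H2 H3. apply (Hleast y'); auto.
Qed.

Definition least_above (N : nat) : nat :=
  proj1_sig (constructive_indefinite_description _ (least_above_exists N)).

Lemma least_above_spec N :
  (N <= least_above N /\ P (least_above N)) /\
  forall y, N <= y -> y < least_above N -> ~ P y.
Proof. unfold least_above. now destruct constructive_indefinite_description. Qed.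

Fixpoint enum (n : nat) : nat :=
  match n with 0 => least_above 0 | S n => least_above (S (enum n)) end.

Lemma enum_in n : P (enum n).
Proof. destruct n; apply least_above_spec. Qed.

Lemma enum_succ n : enum n < enum (S n).
Proof. simpl. pose proof (least_above_spec (S (enum n))). lia. Qed.

Lemma enum_lt_iff n m : enum n < enum m <-> n < m.
Proof.
  assert (mono : forall n m, n < m -> enum n < enum m).
  { induction 1; [apply enum_succ|]. pose proof (enum_succ m0). lia. }
  split; [|apply mono]. intro H.
  destruct (Nat.lt_trichotomy n m) as [Hl|[Hl|Hl]]; [auto|subst; lia|].
  apply mono in Hl. lia.
Qed.

Lemma enum_onto y : P y -> exists n, enum n = y.
Proof.
  intro Hy.
  enough (H : forall n, y <= enum n -> exists m, enum m = y).
  { apply (H y). apply increasing_ge, enum_succ. }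
  induction n; intro Hle.
  - exists 0. destruct (Nat.eq_dec y (enum 0)); auto. exfalso.
    apply ((proj2 (least_above_spec 0)) y); auto; simpl in *; lia.
  - destruct (le_lt_dec y (enum n)); [now apply IHn|].
    exists (S n). destruct (Nat.eq_dec y (enum (S n))); auto. exfalso.
    apply ((proj2 (least_above_spec (S (enum n)))) y); auto; simpl in *; lia.
Qed.

End Enumeration.

(** * Non-computability *)

Lemma K_complement_not_ce : ~ exists d, forall x, W d x <-> ~ K x.
Proof. intros [d Hd]. specialize (Hd d). unfold K in Hd. tauto. Qed.

(* [K] is infinite: every constant code halts on every input. *)
Lemma K_unbounded N : exists y, N <= y /\ K y.
Proof.
  exists (const_index N). split.
  - apply increasing_ge. intro n. apply const_index_mono. lia.
  - exists N. rewrite const_index_eq. apply psi_encode, cConst_ok.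
Qed.

Lemma computable_code f : computable f -> exists c, computes c f.
Proof.
  intros [d Hd]. destruct (encode_surj d) as [c <-]. exists c.
  intro n. apply psi_encode, Hd.
Qed.

Definition enum_K : nat -> nat := enum K K_unbounded.

Lemma K_iff_enum_K i : K i <-> exists m, enum_K m = i.
Proof.
  unfold enum_K. split; [apply enum_onto|]. intros [m <-]. apply enum_in.
Qed.

(* If [n |-> tail (enum_K n)] were computable, the complement of [K] would be
   c.e.: [i] is not in [K] iff no [m <= tail i] has [tail (enum_K m) = tail i],
   a bounded search. *)
Lemma tail_enum_K_not_computable : ~ computable (fun n => tail (enum_K n)).
Proof.
  intro Hf. apply computable_code in Hf as [c Hc].
  set (f := fun n => tail (enum_K n)) in Hc.
  set (tTail := fun t => tHindex (Cst tail_index) t).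
  (* In the environment [n; i]: no [m < tail i + 1] has [f m = tail i]. *)
  set (A := FNot (FEx (tSucc (tTail (Var 1))) (FEq (App1 c f (Var 0)) (tTail (Var 2))))).
  assert (HA : formula_ok A) by (cbn; repeat split; auto with computes).
  apply K_complement_not_ce. exists (encode (search_with A [])). intro i.
  rewrite W_search_with by exact HA. cbn [app].
  change ((exists n : nat, ~ (exists m, m < S (tail i) /\ f m = tail i)) <-> ~ K i).
  rewrite K_iff_enum_K. split.
  - intros [_ Hn] [m <-]. apply Hn. exists m. split; [|reflexivity].
    pose proof (increasing_ge enum_K (enum_succ K K_unbounded) m).
    pose proof (tail_ge (enum_K m)). lia.
  - intro Hi. exists 0. intros [m [_ Hm]]. apply Hi. exists m. now apply tail_inj.
Qed.

Theorem mainTheorem5 :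
  exists e : nat -> nat,
    (forall n, e n < e (S n)) /\
    (forall n x, W (e n) x <-> exists m, n < m /\ x = e m) /\
    ~ computable e.
Proof.
  exists (fun n => tail (enum_K n)). split; [|split].
  - intro n. apply tail_mono, enum_succ.
  - intros n x. rewrite W_tail. split.
    + intros [y [Ky [Hlt ->]]]. apply K_iff_enum_K in Ky as [m <-].
      exists m. split; [now apply (enum_lt_iff K K_unbounded)|reflexivity].
    + intros [m [Hlt ->]]. exists (enum_K m). split; [apply K_iff_enum_K; eauto|].
      split; [now apply (enum_lt_iff K K_unbounded)|reflexivity].
  - apply tail_enum_K_not_computable.
Qed.
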